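(* Let $\mathcal{D}$ be a Steiner $2$-design $S(2,k,v)$ that has a parallel class, and let $G_1$ be its $1$-block intersection graph $1$-$\mathrm{BIG}(\mathcal{D})$. If $G_1$ is silver, then $k^2 \mid v$.
   Context: A $2$-$(v,k,\lambda)$ design ($2<k<v$) is a pair $(V,\mathcal{B})$ where $V$ is a $v$-set and $\mathcal{B}$ is a collection of $k$-subsets of $V$ (blocks) such that every $2$-subset of $V$ lies in exactly $\lambda$ blocks; a Steiner $2$-design $S(2,k,v)$ is a $2$-$(v,k,1)$ design. A parallel class is a set of blocks partitioning $V$. For a design $\mathcal{D}$ and integer $i\ge 0$, the $i$-block intersection graph $i$-$\mathrm{BIG}(\mathcal{D})$ has the blocks as vertices, two blocks adjacent iff they intersect in exactly $i$ elements. An $\alpha$-set of a graph is a maximum independent set. Let $G$ be an $r$-regular graph and $c$ a proper $(r+1)$-coloring of $G$. A vertex $x$ is rainbow with respect to $c$ if every one of the $r+1$ colors appears on the closed neighborhood $N[x]=N(x)\cup\{x\}$. Given an $\alpha$-set $I$, $c$ is silver with respect to $I$ if every $x\in I$ is rainbow; $G$ is silver if it admits a silver coloring with respect to some $\alpha$-set. (The $1$-BIG of an $S(2,k,v)$ is regular, of degree $k(v-k)/(k-1)$.) *)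

From mathcomp Require Import all_boot.
Set Implicit Arguments. Unset Strict Implicit. Unset Printing Implicit Defensive.

(* (V, B) is a Steiner 2-design S(2,k,v) with v = #|V| and 2 < k < v.
   Blocks form a set (a 2-(v,k,1) design has no repeated blocks). *)
Definition steiner2 (V : finType) (k : nat) (B : {set {set V}}) : Prop :=
  [/\ 2 < k, k < #|V|,
      (forall b, b \in B -> #|b| = k) &
      (forall x y : V, x != y -> #|[set b in B | (x \in b) && (y \in b)]| = 1)].

Definition has_parallel_class (V : finType) (B : {set {set V}}) : Prop :=
  exists P : {set {set V}}, P \subset B /\ partition P [set: V].

Definition block (V : finType) (B : {set {set V}}) := {b : {set V} | b \in B}.

Definition BIG (V : finType) (B : {set {set V}}) (i : nat) : rel (block B) :=
  fun b1 b2 => #|(val b1) :&: (val b2)| == i.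
Arguments BIG {V} B i.

Definition independent (T : finType) (e : rel T) (I : {set T}) : Prop :=
  forall x y, x \in I -> y \in I -> ~~ e x y.

Definition alpha_set (T : finType) (e : rel T) (I : {set T}) : Prop :=
  independent e I /\ forall J : {set T}, independent e J -> #|J| <= #|I|.

Definition regular (T : finType) (e : rel T) (r : nat) : Prop :=
  forall x : T, #|[set y | e x y]| = r.

Definition proper_coloring (T : finType) (e : rel T) (r : nat) (c : T -> 'I_r.+1) : Prop :=
  forall x y, e x y -> c x != c y.

Definition rainbow (T : finType) (e : rel T) (r : nat) (c : T -> 'I_r.+1) (x : T) : Prop :=
  forall col : 'I_r.+1, exists y : T, ((y == x) || e x y) && (c y == col).

Definition silver_wrt (T : finType) (e : rel T) (r : nat) (c : T -> 'I_r.+1) (I : {set T}) : Prop :=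
  proper_coloring e c /\ forall x, x \in I -> rainbow e c x.

Definition silver (T : finType) (e : rel T) : Prop :=
  exists r : nat, regular e r /\
    exists I : {set T}, alpha_set e I /\
      exists c : T -> 'I_r.+1, silver_wrt e c I.

(* The blocks of an S(2,k,v) meet in at most one point, so an independent set of
   the 1-block intersection graph is a set of pairwise disjoint blocks; a
   parallel class shows that an alpha-set I is itself a parallel class, hence
   |I| k = v, and every block outside I meets exactly k blocks of I.  The graph
   is regular of degree r = k(v-k)/(k-1) >= |I|, so some colour is missed on I.
   Rainbow vertices of an r-regular graph coloured with r+1 colours see every
   colour exactly once in their closed neighbourhood; counting pairs (x, y) with
   x in I and y in the colour class C of the missing colour adjacent to x gives
   |I| = k |C|, whence v = k^2 |C|. *)
From mathcomp Require Import all_boot zify.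
Set Implicit Arguments. Unset Strict Implicit. Unset Printing Implicit Defensive.

Lemma card_sep_sumb (T : finType) (A : {set T}) (R : pred T) :
  #|[set y in A | R y]| = \sum_(y in A) R y.
Proof.
rewrite -sum1_card big_mkcond /= [RHS]big_mkcond /=.
by apply: eq_bigr => y _; rewrite !inE; case: (y \in A); case: (R y).
Qed.

Lemma double_count (T U : finType) (A : {set T}) (B : {set U}) (R : T -> U -> bool) :
  \sum_(x in A) #|[set y in B | R x y]| = \sum_(y in B) #|[set x in A | R x y]|.
Proof.
under eq_bigr do rewrite card_sep_sumb.
under [RHS]eq_bigr do rewrite card_sep_sumb.
exact: exchange_big.
Qed.

Lemma double_count_const (T U : finType) (A : {set T}) (B : {set U})
    (R : T -> U -> bool) (m n : nat) :
  {in A, forall x, #|[set y in B | R x y]| = m} ->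
  {in B, forall y, #|[set x in A | R x y]| = n} ->
  #|A| * m = #|B| * n.
Proof.
move=> hA hB; rewrite -!sum_nat_const -(eq_bigr _ hA) -(eq_bigr _ hB).
exact: double_count.
Qed.

Section SilverColoring.

Variables (T : finType) (e : rel T) (r : nat) (c : T -> 'I_r.+1).
Hypotheses (e_irr : irreflexive e) (e_reg : regular e r).

(* The closed neighbourhood has r+1 vertices and carries all r+1 colours, so
   [c] is injective on it. *)
Lemma rainbow_color_unique x col : rainbow e c x ->
  #|[set y | ((y == x) || e x y) && (c y == col)]| = 1.
Proof.
move=> hx; pose N := [set y | (y == x) || e x y].
have cardN : #|N| = r.+1.
  have -> : N = x |: [set y | e x y] by apply/setP => y; rewrite !inE.
  by rewrite cardsU1 inE e_irr e_reg.
have c_inj : {in N &, injective c}.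
  apply/imset_injP; rewrite eqn_leq leq_imset_card cardN /=.
  rewrite -[X in X <= _]card_ord -cardsT.
  apply/subset_leq_card/subsetP => col' _.
  have [y /andP[hy /eqP <-]] := hx col'.
  by apply/imsetP; exists y; rewrite ?inE.
have [y0 /andP[hy0 /eqP hc0]] := hx col.
apply/eqP/cards1P; exists y0; apply/setP => y; rewrite !inE.
apply/andP/eqP => [[hy /eqP hc]|->]; last by rewrite hy0 hc0.
by apply: c_inj; rewrite ?inE // hc hc0.
Qed.

Lemma exists_color_missing (I : {set T}) :
  #|I| <= r -> exists col, col \notin c @: I.
Proof.
move=> hI.
have /card_gt0P[col] : 0 < #|~: (c @: I)|.
  by rewrite cardsCs setCK card_ord subn_gt0 ltnS (leq_trans (leq_imset_card _ _)).
by rewrite inE; exists col.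
Qed.

Lemma card_missing_color_class (I : {set T}) (k : nat) col :
  {in I, forall x, rainbow e c x} -> col \notin c @: I ->
  (forall y, y \notin I -> #|[set x in I | e x y]| = k) ->
  #|I| = #|[set y | c y == col]| * k.
Proof.
move=> hI hcol hk; rewrite -[#|I|]muln1.
apply: (double_count_const (R := fun x y => (y == x) || e x y)) => [x hx|y].
  rewrite -(rainbow_color_unique col (hI x hx)).
  by apply: eq_card => y; rewrite !inE andbC.
rewrite inE => /eqP hy.
have yI : y \notin I by apply: contra hcol => yI; rewrite -hy imset_f.
rewrite -(hk y yI); apply: eq_card => x; rewrite !inE.
case: (boolP (x \in I)) => //= xI.
by have -> : (y == x) = false by apply: contraNF yI => /eqP->.
Qed.

End SilverColoring.

Lemma card_block_set (V : finType) (B : {set {set V}}) (Q : pred {set V}) :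
  #|[set b : block B | Q (val b)]| = #|[set b in B | Q b]|.
Proof.
rewrite -(card_imset _ val_inj); apply: eq_card => b.
rewrite !inE; apply/imsetP/andP => [[x]|[hb hQ]].
  by rewrite inE => hx ->; split => //; exact: valP.
by exists (exist _ b hb); rewrite ?inE.
Qed.

Section SteinerDesign.

Variables (V : finType) (k : nat) (B : {set {set V}}).
Hypothesis hD : steiner2 k B.

Lemma card_block (b : block B) : #|val b| = k.
Proof. by case: hD => _ _ Bk _; exact/Bk/valP. Qed.

Lemma card_blocks_through (p q : V) : p != q ->
  #|[set b : block B | (p \in val b) && (q \in val b)]| = 1.
Proof.
move=> hpq; rewrite (card_block_set B (fun b => (p \in b) && (q \in b))).
by case: hD => _ _ _; apply.
Qed.

Lemma card_block_meet_le1 (x y : block B) : x != y -> #|val x :&: val y| <= 1.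
Proof.
move=> hxy; rewrite leqNgt; apply/negP => /card_gt1P[p [q [hp hq hpq]]].
move: hp hq; rewrite !inE => /andP[px py] /andP[qx qy].
have /eqP/cards1P[z hz] := card_blocks_through hpq.
have : x \in [set z] by rewrite -hz inE px qx.
have : y \in [set z] by rewrite -hz inE py qy.
by rewrite !inE => /eqP hy /eqP hx; rewrite hx hy eqxx in hxy.
Qed.

Lemma BIG1_card_meet (x y : block B) : x != y ->
  #|val x :&: val y| = BIG B 1 x y.
Proof.
by move=> hxy; rewrite /BIG; move: (card_block_meet_le1 hxy); case: #|_| => [|[|]].
Qed.

Lemma BIG1_irrefl : irreflexive (BIG B 1).
Proof.
by move=> x; rewrite /BIG setIid card_block; case: hD; case: (k) => [|[|]].
Qed.

Lemma BIG1_sym : symmetric (BIG B 1).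
Proof. by move=> x y; rewrite /BIG setIC. Qed.

Lemma card_BIG1_exact_cover (y : block B) (F : {set block B}) :
  y \notin F -> (forall p, p \in val y -> #|[set x in F | p \in val x]| = 1) ->
  #|[set x in F | BIG B 1 x y]| = k.
Proof.
move=> yF hF.
have := double_count (val y) F (fun p x => p \in val x).
rewrite (eq_bigr _ hF) sum1_card card_block => ->.
rewrite card_sep_sumb; apply: eq_bigr => x xF.
have hxy : x != y by apply: contraNneq yF => <-.
by rewrite -BIG1_card_meet //; apply: eq_card => p; rewrite !inE andbC.
Qed.

Lemma BIG1_degree (x : block B) :
  #|[set y | BIG B 1 x y]| * (k - 1) = (#|V| - k) * k.
Proof.
have through q : q \notin val x ->
    #|[set b in [set b : block B | q \in val b] | BIG B 1 b x]| = k.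
  move=> qx; apply: card_BIG1_exact_cover => [|p px]; first by rewrite inE.
  have hpq : p != q by apply: contraNneq qx => <-.
  rewrite -(card_blocks_through hpq).
  by apply: eq_card => b; rewrite !inE andbC.
have hcompl : #|~: val x| = #|V| - k.
  by rewrite -(cardsC (val x)) card_block addKn.
rewrite -hcompl; symmetry.
apply: (double_count_const (R := fun q (b : block B) => q \in val b)) => [q|b].
  rewrite inE => qx; rewrite -(through q qx).
  by apply: eq_card => b; rewrite !inE BIG1_sym andbC.
rewrite inE => hb.
have -> : #|[set q in ~: val x | q \in val b]| = #|val b :\: val x|.
  by apply: eq_card => q; rewrite !inE andbC.
by rewrite cardsD setIC (eqP hb) card_block.
Qed.

Lemma independent_BIG1_disjoint (I : {set block B}) :
  independent (BIG B 1) I ->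
  {in I &, forall x y : block B, x != y -> [disjoint val x & val y]}.
Proof.
move=> hI x y hx hy hxy.
by rewrite -setI_eq0 -cards_eq0 BIG1_card_meet // (negbTE (hI _ _ hx hy)).
Qed.

Lemma card_cover_independent (I : {set block B}) :
  independent (BIG B 1) I -> #|cover [set val x | x in I]| = #|I| * k.
Proof.
move=> hI.
have /eqP <- : trivIset [set val x | x in I].
  apply/trivIsetP => _ _ /imsetP[x hx ->] /imsetP[y hy ->] hne.
  by apply: (independent_BIG1_disjoint hI hx hy); apply: contraNneq hne => ->.
rewrite big_imset /=; last by move=> x y _ _; apply: val_inj.
by rewrite -sum_nat_const; apply: eq_bigr => x _; rewrite card_block.
Qed.

Lemma independent_exact_cover (I : {set block B}) :
  independent (BIG B 1) I -> #|I| * k = #|V| ->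
  forall p, #|[set x in I | p \in val x]| = 1.
Proof.
move=> hI hcard p.
have cov : cover [set val x | x in I] = setT.
  by apply/eqP; rewrite eqEcard subsetT cardsT card_cover_independent // hcard leqnn.
have : p \in cover [set val x | x in I] by rewrite cov inE.
case/bigcupP=> _ /imsetP[x hx ->] hp.
apply/eqP/cards1P; exists x; apply/setP => y; rewrite !inE.
apply/andP/eqP => [[hy hpy]|->] //.
case: (eqVneq y x) => // hne.
by rewrite (disjointFr (independent_BIG1_disjoint hI hy hx hne) hpy) in hp.
Qed.

Lemma parallel_class_independent (P : {set {set V}}) :
  P \subset B -> partition P [set: V] ->
  exists2 J : {set block B}, independent (BIG B 1) J & #|J| * k = #|V|.
Proof.
move=> PB hP; exists [set b : block B | val b \in P].
  move=> x y; rewrite !inE => hx hy; case: (eqVneq x y) => [->|hxy].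
    by rewrite BIG1_irrefl.
  have hne : val x != val y by apply: contra hxy => /eqP/val_inj->.
  case/and3P: hP => _ /trivIsetP/(_ _ _ hx hy hne) hdis _.
  by rewrite /BIG -setI_eq0 -cards_eq0 in hdis *; rewrite (eqP hdis).
rewrite card_block_set -cardsT (card_partition hP) -sum_nat_const.
have -> : [set b in B | b \in P] = P.
  by apply/setP => b; rewrite inE andb_idl // => /(subsetP PB).
by apply: eq_bigr => b bP; case: hD => _ _ Bk _; rewrite Bk // (subsetP PB).
Qed.

Lemma alpha_set_card (I : {set block B}) :
  has_parallel_class B -> alpha_set (BIG B 1) I -> #|I| * k = #|V|.
Proof.
move=> [P [PB hP]] [hI maxI].
have [J hJ cardJ] := parallel_class_independent PB hP.
apply/eqP; rewrite eqn_leq -{1}(card_cover_independent hI) max_card /=.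
by rewrite -cardJ leq_mul2r maxI ?orbT.
Qed.

End SteinerDesign.

Lemma leq_of_degree_formula (n k r : nat) :
  1 < k -> 1 < n -> r * (k - 1) = (n * k - k) * k -> n <= r.
Proof.
move=> k_gt1 n_gt1 hr.
have : (n - 1) * k * (k - 1) <= r * (k - 1).
  by rewrite mulnBl mul1n hr leq_mul2l leq_subr orbT.
rewrite leq_pmul2r ?subn_gt0 // => /(leq_trans _); apply.
by apply: (@leq_trans ((n - 1) * 2)); [lia | rewrite leq_mul2l k_gt1 orbT].
Qed.

Theorem theorem1 (V : finType) (k : nat) (B : {set {set V}}) :
  steiner2 k B -> has_parallel_class B -> silver (BIG B 1) ->
  (k ^ 2 %| #|V|)%N.
Proof.
move=> hD hP [r [reg [I [hI [c [_ rainb]]]]]].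
have cardI := alpha_set_card hD hP hI.
have [k_gt2 k_ltv] : 2 < k /\ k < #|V| by case: hD.
have I_gt1 : 1 < #|I|.
  by rewrite -(ltn_pmul2r (_ : 0 < k)) ?mul1n ?cardI //; lia.
have [x _] : exists x, x \in I by apply/card_gt0P; exact: ltnW.
have Ir : #|I| <= r.
  apply: (leq_of_degree_formula (k := k)) => //; first lia.
  by rewrite -(reg x) BIG1_degree // cardI.
have [col hcol] := exists_color_missing c Ir.
have nbI y : y \notin I -> #|[set x in I | BIG B 1 x y]| = k.
  move=> yI; apply: (card_BIG1_exact_cover hD yI) => p _.
  exact: (independent_exact_cover hD hI.1 cardI p).
have cardI_col := card_missing_color_class (BIG1_irrefl hD) reg rainb hcol nbI.
by rewrite -cardI cardI_col -mulnA mulnn dvdn_mull.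
Qed.
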